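(* Let $h=h_{\bar 0}\oplus h_{\bar 1}$, $J$, $P$, $q$ and $\tilde h=Ph$ be as described in the context. Let ${\cal A}_{SSR}$ be the self-dual canonical super commutation relations algebra over $h$ and ${\cal A}_{CSR}$ the canonical super commutation relations algebra over $\tilde h$, both as defined in the context. Then ${\cal A}_{SSR}$ and ${\cal A}_{CSR}$ are $\ast$-isomorphic.
   Context: $h_{\bar 0}$ (boson space) and $h_{\bar 1}$ (fermion space) are complex, infinite-dimensional, separable Hilbert spaces and $h=h_{\bar 0}\oplus h_{\bar 1}$ with scalar product $(\cdot,\cdot)$ (antilinear in the first argument). $P_\alpha$ ($\alpha\in\{\bar 0,\bar 1\}={\bf Z}_2$) is the orthogonal projection onto $h_\alpha$ and $\gamma=P_{\bar 0}-P_{\bar 1}$. A vector $f\in h_\alpha$ is homogeneous of degree $\mathrm{deg}(f)=\alpha$. For homogeneous elements $v,w$ of a ${\bf Z}_2$-graded algebra, $\langle v,w\rangle=\mathrm{deg}(v)\cdot\mathrm{deg}(w)$ and the supercommutator is $[v,w]_s=vw-(-1)^{\langle v,w\rangle}wv$, extended bilinearly. $J$ is an even conjugation on $h$ (antilinear, norm-preserving, $J^2=1$, $J\gamma=\gamma J$). $P$ is an orthogonal projection on $h$ commuting with $\gamma$ and satisfying $JP=(1-P)J$. Put $q=P-\gamma(1-P)$ and $\tilde h=Ph$ (a graded Hilbert space with $\tilde h_\alpha=P_\alpha\tilde h$); $\ast$ on vectors/operators denotes the Hilbert adjoint. ${\cal A}_{SSR}$ is the complex $\ast$-algebra generated by an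 identity ${\bf 1}$ and symbols $B^\dagger(f),B(f)$, $f\in h$, subject to the relations: $B^\dagger(c_1f_1+c_2f_2)=c_1B^\dagger(f_1)+c_2B^\dagger(f_2)$; $B^\dagger(f)=B(qf)^\ast$; $[B(f_1),B^\dagger(f_2)]_s=(f_1,f_2){\bf 1}$; $B(f)=B^\dagger(qJf)$; with grading $\mathrm{deg}(B^\dagger(f))=\mathrm{deg}(f)$ for homogeneous $f$. ${\cal A}_{CSR}$ is the complex $\ast$-algebra generated by an identity ${\bf 1}$ and symbols $a^\dagger(\tilde f),a(\tilde f)$, $\tilde f\in\tilde h$, subject to: $a^\dagger(c_1\tilde f_1+c_2\tilde f_2)=c_1a^\dagger(\tilde f_1)+c_2a^\dagger(\tilde f_2)$; $a^\dagger(\tilde f)=a(\tilde f)^\ast$; $[a(\tilde f_1),a^\dagger(\tilde f_2)]_s=(\tilde f_1,\tilde f_2){\bf 1}$; $[a(\tilde f_1),a(\tilde f_2)]_s=0$; with $\mathrm{deg}(a^\dagger(\tilde f))=\mathrm{deg}(\tilde f)$ for homogeneous $\tilde f$. *)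

From HB Require Import structures.
From mathcomp Require Import all_boot all_order all_algebra.
From mathcomp Require Import reals.
From mathcomp Require Export complex.
Set Implicit Arguments. Unset Strict Implicit. Unset Printing Implicit Defensive.
Import Order.TTheory GRing.Theory Num.Theory.
Local Open Scope ring_scope.

Section Defs.
Variable R : realType.
Local Notation C := (R[i]).

Section Hilbert.
Variable H : lmodType C.
Variable ip : H -> H -> C.  (* scalar product, antilinear in 1st argument *)

Definition is_inner_product : Prop :=
  [/\ (forall f c g1 g2, ip f (c *: g1 + g2) = c * ip f g1 + ip f g2),
      (forall f g, ip g f = (ip f g)^*),
      (forall f, 0 <= ip f f) &
      (forall f, ip f f = 0 -> f = 0)].

Definition close (f g : H) (eps : C) : Prop := ip (f - g) (f - g) < eps.

Definition cauchy_seq (u : nat -> H) : Prop :=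
  forall eps : C, 0 < eps -> exists N, forall m n, (N <= m)%N -> (N <= n)%N ->
    close (u m) (u n) eps.

Definition converges_to (u : nat -> H) (l : H) : Prop :=
  forall eps : C, 0 < eps -> exists N, forall n, (N <= n)%N -> close (u n) l eps.

Definition complete_space : Prop :=
  forall u, cauchy_seq u -> exists l, converges_to u l.

Definition separable_sub (S : H -> Prop) : Prop :=
  exists d : nat -> H, (forall n, S (d n)) /\
    forall f, S f -> forall eps : C, 0 < eps -> exists n, close f (d n) eps.

Definition infinite_dim_sub (S : H -> Prop) : Prop :=
  forall n : nat, exists v : 'I_n -> H, (forall k, S (v k)) /\
    forall c : 'I_n -> C, \sum_(k < n) c k *: v k = 0 -> forall k, c k = 0.

Definition is_linear_map (T : H -> H) : Prop :=
  forall c f g, T (c *: f + g) = c *: T f + T g.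

Definition is_antilinear_map (T : H -> H) : Prop :=
  forall c f g, T (c *: f + g) = c^* *: T f + T g.

Definition is_orth_proj (T : H -> H) : Prop :=
  [/\ is_linear_map T, (forall f, T (T f) = T f) &
      (forall f g, ip (T f) g = ip f (T g))].

Variables (P0 J P : H -> H).
(* P0 = projection onto the boson space h_0; P_1 = 1 - P0 *)
Definition gamma (f : H) : H := P0 f - (f - P0 f).
Definition qop (f : H) : H := P f - gamma (f - P f).

(* homogeneous of degree b (false = 0bar, true = 1bar) *)
Definition homog (b : bool) (f : H) : Prop := P0 f = (if b then 0 else f).

Definition scr_setting : Prop :=
  [/\ is_inner_product /\ complete_space, is_orth_proj P0,
      infinite_dim_sub (homog false) /\ infinite_dim_sub (homog true),
      separable_sub (homog false) /\ separable_sub (homog true) /\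
      [/\ is_antilinear_map J, (forall f, ip (J f) (J f) = ip f f),
          (forall f, J (J f) = f) & (forall f, J (gamma f) = gamma (J f))] &
      [/\ is_orth_proj P, (forall f, P (gamma f) = gamma (P f)) &
          (forall f, J (P f) = J f - P (J f))]].

Definition tilde_h : Type := {f : H | P f = f}.
End Hilbert.

Section StarAlg.
Variable A : algType C.

Definition is_star (s : A -> A) : Prop :=
  [/\ (forall x y, s (x + y) = s x + s y),
      (forall (c : C) x, s (c *: x) = c^* *: s x),
      (forall x y, s (x * y) = s y * s x) &
      (forall x, s (s x) = x)].

Definition scomm (b1 b2 : bool) (x y : A) : A :=
  x * y - (-1) ^+ (b1 && b2) * (y * x).
End StarAlg.

Definition is_star_hom (A A' : algType C) (s : A -> A) (s' : A' -> A')
    (phi : A -> A') : Prop :=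
  [/\ (forall (c : C) x y, phi (c *: x + y) = c *: phi x + phi y),
      (forall x y, phi (x * y) = phi x * phi y),
      phi 1 = 1 &
      (forall x, phi (s x) = s' (phi x))].

Section SSR.
Variables (H : lmodType C) (ip : H -> H -> C) (P0 J P : H -> H).

Definition SSR_rels (A : algType C) (s : A -> A) (Bd B : H -> A) : Prop :=
  [/\ (forall (c1 c2 : C) f1 f2, Bd (c1 *: f1 + c2 *: f2) = c1 *: Bd f1 + c2 *: Bd f2),
      (forall f, Bd f = s (B (qop P0 P f))),
      (forall b1 b2 f1 f2, homog P0 b1 f1 -> homog P0 b2 f2 ->
          scomm b1 b2 (B f1) (Bd f2) = ip f1 f2 *: 1) &
      (forall f, B f = Bd (qop P0 P (J f)))].

(* A (with star s and generators B^dagger = Bd, B) is the complex *-algebra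
   generated by the symbols subject to the relations: universal property. *)
Definition is_A_SSR (A : algType C) (s : A -> A) (Bd B : H -> A) : Prop :=
  [/\ is_star s, SSR_rels s Bd B &
      forall (A' : algType C) (s' : A' -> A') (Bd' B' : H -> A'),
        is_star s' -> SSR_rels s' Bd' B' ->
        exists phi : A -> A',
          [/\ is_star_hom s s' phi, (forall f, phi (Bd f) = Bd' f),
              (forall f, phi (B f) = B' f) &
              forall psi : A -> A', is_star_hom s s' psi ->
                (forall f, psi (Bd f) = Bd' f) -> (forall f, psi (B f) = B' f) ->
                forall x, psi x = phi x]].
End SSR.

Section CSR.
Variables (H : lmodType C) (ip : H -> H -> C) (P0 P : H -> H).
Local Notation th := (tilde_h P).

Definition CSR_rels (A : algType C) (s : A -> A) (ad a : th -> A) : Prop :=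
  [/\ (forall (c1 c2 : C) (g1 g2 g : th), sval g = c1 *: sval g1 + c2 *: sval g2 ->
          ad g = c1 *: ad g1 + c2 *: ad g2),
      (forall g, ad g = s (a g)),
      (forall b1 b2 (g1 g2 : th), homog P0 b1 (sval g1) -> homog P0 b2 (sval g2) ->
          scomm b1 b2 (a g1) (ad g2) = ip (sval g1) (sval g2) *: 1) &
      (forall b1 b2 (g1 g2 : th), homog P0 b1 (sval g1) -> homog P0 b2 (sval g2) ->
          scomm b1 b2 (a g1) (a g2) = 0)].

Definition is_A_CSR (A : algType C) (s : A -> A) (ad a : th -> A) : Prop :=
  [/\ is_star s, CSR_rels s ad a &
      forall (A' : algType C) (s' : A' -> A') (ad' a' : th -> A'),
        is_star s' -> CSR_rels s' ad' a' ->
        exists phi : A -> A',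
          [/\ is_star_hom s s' phi, (forall g, phi (ad g) = ad' g),
              (forall g, phi (a g) = a' g) &
              forall psi : A -> A', is_star_hom s s' psi ->
                (forall g, psi (ad g) = ad' g) -> (forall g, psi (a g) = a' g) ->
                forall x, psi x = phi x]].
End CSR.
End Defs.

From HB Require Import structures.
From mathcomp Require Import all_boot all_order all_algebra.
From mathcomp Require Import reals complex.
From mathcomp Require Import ring.
Import Order.TTheory GRing.Theory Num.Theory.
Set Implicit Arguments.
Unset Strict Implicit.
Local Open Scope ring_scope.

(* Inside A_CSR, B^dagger(f) := a^dagger(P f) - a(P gamma J f) and
   B(f) := a(P f) + a^dagger(P J f) satisfy the relations of A_SSR; inside
   A_SSR, a^dagger(g) := B^dagger(g) and a(g) := B(g) satisfy those of A_CSR.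
   The supercommutator relation reduces to the identity
     (f1, f2) = (P f1, P f2) + (-1)^(|f1||f2|) (P gamma J f2, P J f1),
   which holds because J is antiunitary and J P = (1 - P) J.  The universal
   properties turn both assignments into *-homomorphisms, and the composites
   fix the generators (in A_SSR, B^dagger(f) = B^dagger(P f) - B(P gamma J f)),
   so by uniqueness they are the identities. *)

Section Supercommutator.
Variables (R : realType) (A : algType R[i]).
Implicit Types (b : bool) (x y : A).

Lemma scommDl b1 b2 x1 x2 y :
  scomm b1 b2 (x1 + x2) y = scomm b1 b2 x1 y + scomm b1 b2 x2 y.
Proof. by rewrite /scomm mulrDl mulrDr mulrDr opprD addrACA. Qed.

Lemma scommBr b1 b2 x y1 y2 :
  scomm b1 b2 x (y1 - y2) = scomm b1 b2 x y1 - scomm b1 b2 x y2.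
Proof. by rewrite /scomm mulrBr mulrBl mulrBr !opprD addrACA. Qed.

Lemma scomm_antisym b1 b2 x y :
  scomm b1 b2 y x = - ((-1) ^+ (b1 && b2) *: scomm b2 b1 x y).
Proof.
rewrite /scomm andbC; case: (b2 && b1).
  by rewrite expr1 scaleN1r opprK !mulN1r !opprK addrC.
by rewrite expr0 scale1r !mul1r opprB.
Qed.

Section Star.
Variable s : A -> A.
Hypothesis s_star : is_star s.

Lemma is_star_antilinear : linear_for (Num.conj \; *:%R) s.
Proof. by case: s_star => sD sZ _ _ c x y; rewrite sD sZ. Qed.

#[local] HB.instance Definition _ :=
  GRing.isLinear.Build _ _ _ _ s is_star_antilinear.

Lemma star_scomm b1 b2 x y : s (scomm b1 b2 x y) = scomm b2 b1 (s y) (s x).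
Proof.
case: s_star => _ _ sM _; rewrite /scomm andbC; case: (b2 && b1).
  by rewrite !expr1 !mulN1r linearB linearN /= !sM.
by rewrite !expr0 !mul1r linearB /= !sM.
Qed.
End Star.
End Supercommutator.

Section StarHom.
Variable R : realType.

Lemma is_star_hom_id (A : algType R[i]) (s : A -> A) : is_star_hom s s id.
Proof. by split. Qed.

Lemma is_star_hom_comp (A1 A2 A3 : algType R[i]) (s1 : A1 -> A1) (s2 : A2 -> A2)
    (s3 : A3 -> A3) (f : A1 -> A2) (g : A2 -> A3) :
  is_star_hom s1 s2 f -> is_star_hom s2 s3 g -> is_star_hom s1 s3 (g \o f).
Proof.
case=> fL fM f1 fs [gL gM g1 gs]; split=> /=.
- by move=> c x y; rewrite fL gL.
- by move=> x y; rewrite fM gM.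
- by rewrite f1 g1.
- by move=> x; rewrite fs gs.
Qed.

Lemma is_star_homB (A1 A2 : algType R[i]) (s1 : A1 -> A1) (s2 : A2 -> A2)
    (f : A1 -> A2) :
  is_star_hom s1 s2 f -> forall x y, f (x - y) = f x - f y.
Proof. by case=> fL _ _ _ x y; rewrite addrC -scaleN1r fL scaleN1r addrC. Qed.
End StarHom.

Section Polarization.
Variables (R : realType) (H : lmodType R[i]).

Lemma sesquilinear_diag0 (D : {bilinear H -> H -> R[i] | Num.conj \; *%R & *%R}) :
  (forall x, D x x = 0) -> forall x y, D x y = 0.
Proof.
move=> D0 x y.
have sym : D x y + D y x = 0.
  by have := D0 (x + y); rewrite linearDl !linearDr /= !D0 add0r addr0.
have antisym : D x y - D y x = 0.
  have := D0 (x + 'i *: y).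
  rewrite linearDl !linearDr /= linearZl_LR !linearZr_LR /= linearZl_LR /= !D0.
  rewrite conjCi !mulr0 add0r addr0 mulNr -mulrBr => /eqP.
  by rewrite mulf_eq0 (negbTE (neq0Ci _)) => /eqP.
have twice : D x y *+ 2 = 0.
  rewrite mulr2n -{1}(subrK (D y x) (D x y)) -addrA [D y x + _]addrC.
  by rewrite antisym sym add0r.
by apply/eqP; move/eqP: twice; rewrite mulrn_eq0.
Qed.
End Polarization.

Section ScrSetting.
Variables (R : realType) (H : lmodType R[i]) (ip : H -> H -> R[i]).
Variables (P0 J P : H -> H).
Hypotheses (ipDZr : forall f c g1 g2, ip f (c *: g1 + g2) = c * ip f g1 + ip f g2)
           (ipC : forall f g, ip g f = (ip f g)^*).
Hypotheses (P0_linear : is_linear_map P0) (P0K : forall f, P0 (P0 f) = P0 f)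
           (P0_sym : forall f g, ip (P0 f) g = ip f (P0 g)).
Hypotheses (J_antilinear : is_antilinear_map J)
           (J_norm : forall f, ip (J f) (J f) = ip f f)
           (JK : forall f, J (J f) = f)
           (J_gamma : forall f, J (gamma P0 f) = gamma P0 (J f)).
Hypotheses (P_linear : is_linear_map P) (PK : forall f, P (P f) = P f)
           (P_sym : forall f g, ip (P f) g = ip f (P g))
           (P_gamma : forall f, P (gamma P0 f) = gamma P0 (P f))
           (J_P : forall f, J (P f) = J f - P (J f)).

Local Notation γ := (gamma P0).
Local Notation q := (qop P0 P).

Let ip_antilinear g : linear_for (Num.conj \; *%R) (ip^~ g).
Proof. by move=> c f1 f2; rewrite /= !(ipC g) ipDZr rmorphD rmorphM. Qed.

#[local] HB.instance Definition _ :=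
  bilinear_isBilinear.Build R[i] H H R[i] _ _ ip (ip_antilinear, ipDZr).
#[local] HB.instance Definition _ := GRing.isLinear.Build _ _ _ _ P0 P0_linear.
#[local] HB.instance Definition _ := GRing.isLinear.Build _ _ _ _ P P_linear.
#[local] HB.instance Definition _ :=
  GRing.isLinear.Build _ _ _ _ J (J_antilinear : linear_for (Num.conj \; *:%R) J).

Lemma gammaE f : γ f = P0 f *+ 2 - f.
Proof. by rewrite /gamma opprB addrA -mulr2n. Qed.

Let gamma_linear : linear γ.
Proof.
by move=> c f g; rewrite !gammaE linearP mulrnDl scalerBr scalerMnr opprD addrACA.
Qed.

#[local] HB.instance Definition _ := GRing.isLinear.Build _ _ _ _ γ gamma_linear.

Lemma P0_gamma f : P0 (γ f) = P0 f.
Proof. by rewrite gammaE linearB linearMn /= P0K mulr2n addrK. Qed.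

Lemma gamma_P0 f : γ (P0 f) = P0 f.
Proof. by rewrite gammaE P0K mulr2n addrK. Qed.

Lemma gammaK f : γ (γ f) = f.
Proof. by rewrite [LHS]gammaE P0_gamma gammaE opprB subrKC. Qed.

Lemma commute_P0_of_gamma (T : {additive H -> H}) :
  (forall f, T (γ f) = γ (T f)) -> forall f, T (P0 f) = P0 (T f).
Proof.
move=> Tγ f; have := Tγ f; rewrite !gammaE raddfB raddfMn => /addIr.
rewrite -[T _ *+ 2]scaler_nat -[P0 _ *+ 2]scaler_nat => /scalerI.
by apply; rewrite pnatr_eq0.
Qed.

Lemma gamma_homog b f : homog P0 b f -> γ f = if b then - f else f.
Proof.
by rewrite /homog gammaE => ->; case: b; rewrite ?mul0rn ?sub0r // mulr2n addrK.
Qed.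

Lemma homog_commute (T : {additive H -> H}) b f :
  (forall f, T (P0 f) = P0 (T f)) -> homog P0 b f -> homog P0 b (T f).
Proof. by rewrite /homog => TP0 hf; rewrite -TP0 hf; case: b {hf}; rewrite ?raddf0. Qed.

Lemma homog_P b f : homog P0 b f -> homog P0 b (P f).
Proof. exact/homog_commute/commute_P0_of_gamma. Qed.

Lemma homog_J b f : homog P0 b f -> homog P0 b (J f).
Proof. exact/homog_commute/commute_P0_of_gamma. Qed.

Lemma homog_gamma b f : homog P0 b f -> homog P0 b (γ f).
Proof. by apply: homog_commute => g /=; rewrite P0_gamma gamma_P0. Qed.

Lemma homogB b f g : homog P0 b f -> homog P0 b g -> homog P0 b (f - g).
Proof. by rewrite /homog linearB /= => -> ->; case: b; rewrite ?subr0. Qed.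

Lemma homog_q b f : homog P0 b f -> homog P0 b (q f).
Proof.
by move=> hf; apply: homogB (homog_P hf) (homog_gamma (homogB hf (homog_P hf))).
Qed.

Lemma homog_orthogonal b1 b2 f g :
  b1 != b2 -> homog P0 b1 f -> homog P0 b2 g -> ip f g = 0.
Proof.
rewrite /homog; case: b1; case: b2 => // _ hf hg.
  by rewrite -hg -P0_sym hf linear0l.
by rewrite -hf P0_sym hg linear0r.
Qed.

Definition ip_J_defect f g := ip (J g) (J f) - ip f g.

Let ip_J_defect_antilinear g : linear_for (Num.conj \; *%R) (ip_J_defect^~ g).
Proof.
by move=> c f1 f2; rewrite /ip_J_defect /= linearP /= ipDZr linearPl /=; ring.
Qed.

Let ip_J_defect_linear f : linear_for *%R (ip_J_defect f).
Proof.
by move=> c g1 g2; rewrite /ip_J_defect /= linearP /= linearPl /= ipDZr conjCK; ring.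
Qed.

#[local] HB.instance Definition _ := bilinear_isBilinear.Build R[i] H H R[i] _ _
  ip_J_defect (ip_J_defect_antilinear, ip_J_defect_linear).

Lemma ip_J f g : ip (J f) (J g) = ip g f.
Proof.
have diag0 h : ip_J_defect h h = 0 by rewrite /ip_J_defect J_norm subrr.
by apply/eqP; rewrite -subr_eq0; apply/eqP; exact: sesquilinear_diag0 diag0 g f.
Qed.

Lemma P_J f : P (J f) = J (f - P f).
Proof. by rewrite linearB /= J_P opprB subrKC. Qed.

Lemma P_J_P f : P (J (P f)) = 0.
Proof. by rewrite P_J PK subrr linear0. Qed.

Lemma P_compl f : P (f - P f) = 0.
Proof. by rewrite linearB /= PK subrr. Qed.

(* An unrestricted [linearB] may read [- γ f] as [-%R] applied to the unfolded
   difference [γ f = P0 f - (f - P0 f)]; hence the occurrence patterns below. *)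
Lemma P_q f : P (q f) = P f.
Proof. by rewrite /qop linearB /= PK P_gamma P_compl [γ 0]linear0 subr0. Qed.

Lemma qK f : q (q f) = f.
Proof.
rewrite {1}/qop P_q.
have -> : q f - P f = - γ (f - P f) by rewrite /qop addrC addKr.
by rewrite [γ (- _)]linearN /= gammaK opprK subrKC.
Qed.

Lemma q_id f : P f = f -> q f = f.
Proof. by move=> Pf; rewrite /qop Pf subrr [γ 0]linear0 subr0. Qed.

Lemma P_J_q f : P (J (q f)) = - P (γ (J f)).
Proof.
rewrite /qop [J (_ - _)]linearB /= J_gamma -P_J [P (_ - _)]linearB /= P_J_P.
by rewrite P_gamma PK sub0r P_gamma.
Qed.

Lemma P_gamma_J_q_J f : P (γ (J (q (J f)))) = - P f.
Proof. by rewrite P_gamma P_J_q JK P_gamma [γ (- _)]linearN /= gammaK. Qed.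

Lemma q_J_P_gamma_J f : q (J (P (γ (J f)))) = P f - f.
Proof.
rewrite J_P J_gamma JK /qop P_compl subr0 sub0r [γ (_ - _)]linearB /=.
by rewrite P_gamma !gammaK opprB.
Qed.

Lemma ip_split f g : ip f g = ip (P f) (P g) + ip (f - P f) (g - P g).
Proof. by rewrite linearBl /= !linearBr /= !P_sym !PK; ring. Qed.

Lemma ip_homog_split b1 b2 f1 f2 : homog P0 b1 f1 -> homog P0 b2 f2 ->
  ip f1 f2 = ip (P f1) (P f2) + (-1) ^+ (b1 && b2) * ip (P (γ (J f2))) (P (J f1)).
Proof.
move=> h1 h2; have [eb|neb] := eqVneq b1 b2.
  rewrite -eb andbb (gamma_homog (homog_J h2)) -eb; case: (b1) => /=.
    by rewrite expr1 linearN linearNl /= mulN1r opprK !P_J ip_J -ip_split.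
  by rewrite expr0 mul1r !P_J ip_J -ip_split.
rewrite (homog_orthogonal neb h1 h2) (homog_orthogonal neb (homog_P h1) (homog_P h2)).
rewrite (homog_orthogonal _ (homog_P (homog_gamma (homog_J h2))) (homog_P (homog_J h1))).
  by rewrite mulr0 addr0.
by rewrite eq_sym.
Qed.

Definition projP f : tilde_h P := exist (fun g => P g = g) (P f) (PK f).

Lemma tilde_h_inj (g1 g2 : tilde_h P) : sval g1 = sval g2 -> g1 = g2.
Proof.
by case: g1 g2 => f1 h1 [f2 h2] /= e; subst f2; congr exist; exact: eq_irrelevance.
Qed.

Lemma projP_sval g : projP (sval g) = g.
Proof. by apply: tilde_h_inj; exact: (proj2_sig g). Qed.

Lemma projP_eq f1 f2 : P f1 = P f2 -> projP f1 = projP f2.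
Proof. by move=> e; apply: tilde_h_inj. Qed.

Section SSRFromCSR.
Variables (A : algType R[i]) (s : A -> A) (ad a : tilde_h P -> A).
Hypotheses (s_star : is_star s) (rels : CSR_rels ip P0 s ad a).

#[local] HB.instance Definition _ :=
  GRing.isLinear.Build _ _ _ _ s (is_star_antilinear s_star).

Lemma CSR_a_star g : a g = s (ad g).
Proof. by case: rels => _ ad_star _ _; case: s_star => _ _ _ sK; rewrite ad_star sK. Qed.

Lemma CSR_ad_projP c1 c2 f f1 f2 : P f = c1 *: P f1 + c2 *: P f2 ->
  ad (projP f) = c1 *: ad (projP f1) + c2 *: ad (projP f2).
Proof. by case: rels => ad_lin _ _ _ e; apply: ad_lin. Qed.

Lemma CSR_a_projP c1 c2 f f1 f2 : P f = c1 *: P f1 + c2 *: P f2 ->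
  a (projP f) = c1^* *: a (projP f1) + c2^* *: a (projP f2).
Proof. by move=> e; rewrite !CSR_a_star (CSR_ad_projP e) linearD !linearZ. Qed.

Lemma CSR_a_projPN f g : P f = - P g -> a (projP f) = - a (projP g).
Proof.
move=> e.
by rewrite (@CSR_a_projP (-1) 0 f g g) ?rmorphN1 ?rmorph0 ?scaleN1r ?scale0r ?addr0.
Qed.

Lemma CSR_a_projP0 f : P f = 0 -> a (projP f) = 0.
Proof.
by move=> e; rewrite (@CSR_a_projP 0 0 f f f) ?rmorph0 ?scale0r ?addr0.
Qed.

Definition Bd_of_CSR f := ad (projP f) - a (projP (γ (J f))).
Definition B_of_CSR f := a (projP f) + ad (projP (J f)).

Lemma CSR_ad_eq g : ad g = Bd_of_CSR (sval g).
Proof.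
rewrite /Bd_of_CSR projP_sval CSR_a_projP0 ?subr0 //.
by rewrite P_gamma P_J (proj2_sig g) subrr !linear0.
Qed.

Lemma Bd_of_CSR_linear c1 c2 f1 f2 :
  Bd_of_CSR (c1 *: f1 + c2 *: f2) = c1 *: Bd_of_CSR f1 + c2 *: Bd_of_CSR f2.
Proof.
rewrite /Bd_of_CSR (@CSR_ad_projP c1 c2 _ f1 f2); last by rewrite linearD !linearZ.
rewrite (@CSR_a_projP c1^* c2^* _ (γ (J f1)) (γ (J f2))) ?conjCK.
  by rewrite !scalerBr opprD addrACA.
by rewrite [J _]linearD !linearZ /= [γ _]linearD !linearZ /= [P _]linearD !linearZ.
Qed.

Lemma Bd_of_CSR_star f : Bd_of_CSR f = s (B_of_CSR (q f)).
Proof.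
case: rels => _ ad_star _ _.
rewrite /B_of_CSR linearD /= -ad_star -CSR_a_star (projP_eq (P_q f)).
by rewrite (@CSR_a_projPN (J (q f)) (γ (J f))) ?P_J_q.
Qed.

Lemma scomm_B_Bd_of_CSR b1 b2 f1 f2 : homog P0 b1 f1 -> homog P0 b2 f2 ->
  scomm b1 b2 (B_of_CSR f1) (Bd_of_CSR f2) = ip f1 f2 *: 1.
Proof.
case: rels => _ ad_star a_ad a_a h1 h2.
have hP1 := homog_P h1; have hPJ1 := homog_P (homog_J h1).
have hP2 := homog_P h2; have hPgJ2 := homog_P (homog_gamma (homog_J h2)).
have ad_ad : scomm b1 b2 (ad (projP (J f1))) (ad (projP f2)) = 0.
  by rewrite !ad_star -(star_scomm s_star) a_a // linear0.
have ad_a : scomm b1 b2 (ad (projP (J f1))) (a (projP (γ (J f2)))) =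
    - (((-1) ^+ (b1 && b2) * ip (P (γ (J f2))) (P (J f1))) *: 1).
  by rewrite scomm_antisym a_ad // scalerA.
rewrite /B_of_CSR /Bd_of_CSR scommDl !scommBr a_ad // a_a // ad_ad ad_a /=.
by rewrite (ip_homog_split h1 h2) subr0 sub0r opprK scalerDl.
Qed.

Lemma B_of_CSR_J f : B_of_CSR f = Bd_of_CSR (q (J f)).
Proof.
rewrite /B_of_CSR /Bd_of_CSR (projP_eq (P_q (J f))).
by rewrite (@CSR_a_projPN (γ (J (q (J f)))) f) ?P_gamma_J_q_J // opprK addrC.
Qed.

Lemma SSR_rels_of_CSR : SSR_rels ip P0 J P s Bd_of_CSR B_of_CSR.
Proof.
split; [exact: Bd_of_CSR_linear | exact: Bd_of_CSR_star | | exact: B_of_CSR_J].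
exact: scomm_B_Bd_of_CSR.
Qed.
End SSRFromCSR.

Section CSRFromSSR.
Variables (A : algType R[i]) (s : A -> A) (Bd B : H -> A).
Hypothesis rels : SSR_rels ip P0 J P s Bd B.

Definition ad_of_SSR (g : tilde_h P) := Bd (sval g).
Definition a_of_SSR (g : tilde_h P) := B (sval g).

Lemma CSR_rels_of_SSR : CSR_rels ip P0 s ad_of_SSR a_of_SSR.
Proof.
case: rels => Bd_lin Bd_star scomm_B_Bd B_J; split.
- by move=> c1 c2 g1 g2 g e; rewrite /ad_of_SSR e Bd_lin.
- by move=> g; rewrite /ad_of_SSR /a_of_SSR Bd_star q_id //; exact: (proj2_sig g).
- by move=> b1 b2 g1 g2; exact: scomm_B_Bd.
- move=> b1 b2 g1 g2 h1 h2; rewrite /a_of_SSR [B (sval g2)]B_J.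
  rewrite (scomm_B_Bd _ _ _ _ h1 (homog_q (homog_J h2))) -(proj2_sig g1) P_sym P_q.
  by rewrite P_J (proj2_sig g2) subrr linear0 linear0r scale0r.
Qed.

Lemma SSR_B_star (s_star : is_star s) f : B f = s (Bd (q f)).
Proof.
by case: rels => _ Bd_star _ _; case: s_star => _ _ _ sK; rewrite Bd_star qK sK.
Qed.

Lemma SSR_Bd_split f : Bd f = Bd (P f) - B (P (γ (J f))).
Proof.
case: rels => Bd_lin _ _ B_J.
have := Bd_lin 1 (-1) (P f) (P f - f).
rewrite !scale1r !scaleN1r opprB subrKC => ->.
by rewrite B_J q_J_P_gamma_J.
Qed.
End CSRFromSSR.

Lemma A_SSR_endo_id (A : algType R[i]) (s : A -> A) (Bd B : H -> A) (chi : A -> A) :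
  is_A_SSR ip P0 J P s Bd B -> is_star_hom s s chi ->
  (forall f, chi (Bd f) = Bd f) -> chi =1 id.
Proof.
case=> s_star rels univ chi_hom chi_Bd.
have chi_B f : chi (B f) = B f.
  by case: chi_hom => _ _ _ chi_s; rewrite (SSR_B_star rels s_star) chi_s chi_Bd.
have [phi [_ _ _ phi_uniq]] := univ _ _ _ _ s_star rels.
move=> x; rewrite (phi_uniq _ chi_hom chi_Bd chi_B).
by rewrite -(phi_uniq id (is_star_hom_id s) (fun=> erefl) (fun=> erefl)).
Qed.

Lemma A_CSR_endo_id (A : algType R[i]) (s : A -> A) (ad a : tilde_h P -> A)
    (chi : A -> A) :
  is_A_CSR ip P0 s ad a -> is_star_hom s s chi ->
  (forall g, chi (ad g) = ad g) -> chi =1 id.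
Proof.
case=> s_star rels univ chi_hom chi_ad.
have chi_a g : chi (a g) = a g.
  by case: chi_hom => _ _ _ chi_s; rewrite (CSR_a_star s_star rels) chi_s chi_ad.
have [phi [_ _ _ phi_uniq]] := univ _ _ _ _ s_star rels.
move=> x; rewrite (phi_uniq _ chi_hom chi_ad chi_a).
by rewrite -(phi_uniq id (is_star_hom_id s) (fun=> erefl) (fun=> erefl)).
Qed.

Theorem A_SSR_iso_A_CSR (A1 : algType R[i]) (s1 : A1 -> A1) (Bd B : H -> A1)
    (A2 : algType R[i]) (s2 : A2 -> A2) (ad a : tilde_h P -> A2) :
  is_A_SSR ip P0 J P s1 Bd B -> is_A_CSR ip P0 s2 ad a ->
  exists phi : A1 -> A2, is_star_hom s1 s2 phi /\ bijective phi.
Proof.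
move=> SSR1 CSR2.
have [s1_star rels1 univ1] := SSR1; have [s2_star rels2 univ2] := CSR2.
have [phi [phi_hom phi_Bd _ _]] :=
  univ1 _ _ _ _ s2_star (SSR_rels_of_CSR s2_star rels2).
have [psi [psi_hom psi_ad psi_a _]] := univ2 _ _ _ _ s1_star (CSR_rels_of_SSR rels1).
exists phi; split=> //; exists psi.
- apply: (A_SSR_endo_id SSR1 (is_star_hom_comp phi_hom psi_hom)) => f /=.
  rewrite phi_Bd (is_star_homB psi_hom) psi_ad psi_a /ad_of_SSR /a_of_SSR /=.
  exact/esym/(SSR_Bd_split rels1).
- apply: (A_CSR_endo_id CSR2 (is_star_hom_comp psi_hom phi_hom)) => g /=.
  by rewrite psi_ad /ad_of_SSR phi_Bd -(CSR_ad_eq s2_star rels2).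
Qed.
End ScrSetting.

Theorem lemma1 (R : realType) (H : lmodType R[i]) (ip : H -> H -> R[i])
    (P0 J P : H -> H) (hset : scr_setting ip P0 J P)
    (A1 : algType R[i]) (s1 : A1 -> A1) (Bd B : H -> A1)
    (hA1 : is_A_SSR ip P0 J P s1 Bd B)
    (A2 : algType R[i]) (s2 : A2 -> A2) (ad a : tilde_h P -> A2)
    (hA2 : is_A_CSR ip P0 s2 ad a) :
  exists phi : A1 -> A2, is_star_hom s1 s2 phi /\ bijective phi.
Proof.
case: hset => [[[ipDZr ipC _ _] _] [P0_linear P0K P0_sym] _ [_ [_ J_conj]] P_props].
case: J_conj => J_antilinear J_norm JK J_gamma.
case: P_props => [[P_linear PK P_sym] P_gamma J_P].
exact: (A_SSR_iso_A_CSR ipDZr ipC P0_linear P0K P0_sym J_antilinear J_norm JK J_gamma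
  P_linear PK P_sym P_gamma J_P hA1 hA2).
Qed.
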